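(* Let $p\ge7$ be a prime. Then the cycle $C_{2p}$ admits an optimal extended irregular dominating set.
   Context: $C_m$ is the cycle on $m$ vertices. In a finite simple graph $\Gamma=(V,E)$ with distance $d$, a vertex $v$ carrying a non-negative integer label $\ell$ dominates (covers) exactly the vertices $u$ with $d(u,v)=\ell$; a vertex labeled $0$ dominates only itself. For $k\ge0$, a $k$-extended irregular dominating set is a set $S\subseteq V$ of $k$ vertices with a labeling $\lambda:S\to\mathbb{Z}_{\ge0}$ with distinct labels, such that every vertex of $V$ is dominated by some vertex of $S$; it is assumed that some vertex of $S$ has label $0$. $\gamma_e(\Gamma)$ is the minimum cardinality of such a set; a $k$-extended irregular dominating set is optimal if $k=\gamma_e(\Gamma)$. *)

From mathcomp Require Import all_boot.
Set Implicit Arguments. Unset Strict Implicit. Unset Printing Implicit Defensive.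

(* A finite simple graph is given by a symmetric irreflexive relation [e] on a finType. *)

Fixpoint ball (T : finType) (e : rel T) (k : nat) (x : T) : {set T} :=
  match k with
  | 0 => [set x]
  | k'.+1 => ball e k' x :|: [set z | [exists y in ball e k' x, e y z]]
  end.

Definition at_dist (T : finType) (e : rel T) (x y : T) (l : nat) : bool :=
  (y \in ball e l x) && (if l is l'.+1 then y \notin ball e l' x else true).

Definition cycle_rel (m : nat) : rel 'I_m :=
  fun i j => ((i.+1 %% m) == j) || ((j.+1 %% m) == i).

Definition ext_irr_dom (T : finType) (e : rel T) (S : {set T}) (lam : T -> nat) : Prop :=
  {in S &, injective lam} /\
  (exists2 v, v \in S & lam v = 0) /\
  (forall u : T, exists2 v, v \in S & at_dist e v u (lam v)).

Definition optimal_ext_irr_dom (T : finType) (e : rel T) (S : {set T}) (lam : T -> nat) : Prop :=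
  ext_irr_dom e S lam /\
  (forall (S' : {set T}) (lam' : T -> nat), ext_irr_dom e S' lam' -> #|S| <= #|S'|).

From mathcomp Require Import all_boot all_algebra finfield zify ring.
From Stdlib Require Import Classical.
Set Implicit Arguments. Unset Strict Implicit. Unset Printing Implicit Defensive.
Import GRing.Theory.

(* Through the Chinese remainder theorem a vertex of C_2p is a pair (parity, residue in F_p),
   and the vertices at distance l from v are v + l and v - l, whose parity is that of v
   shifted by l and whose residue is that of v shifted by l or -l.  Fix a quadratic
   non-residue w <> -1 and put k = (w + 1) / (w - 1), so that k + 1 = w (k - 1).  Label 0
   sits on the even vertex 0; a nonzero residue label l sits on (parity of l, k l) and
   dominates the even vertices (k + 1) l and (k - 1) l; a non-residue label l, and the
   label p, sit on (opposite parity of l, k (l - 2)) and dominate the odd vertices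
   (k + 1) l - 2k and (k - 1) l - 2k.  Since (k + 1) / (k - 1) = w is a non-residue, the
   products (k +- 1) l reach every nonzero residue class both when l ranges over the
   residues and when it ranges over the non-residues; with the even vertex 0 (label 0)
   and the odd vertex -2k (label p), these p + 1 distinct centres dominate all 2p
   vertices.  A dominating set of minimum size then exists. *)

Lemma optimal_ext_irr_dom_exists (T : finType) (e : rel T) :
  (exists S lam, ext_irr_dom e S lam) -> exists S lam, optimal_ext_irr_dom e S lam.
Proof.
case=> S [lam]; elim: {S}#|S|.+1 {-2}S lam (ltnSn #|S|) => // n IH S lam leSn domS.
case: (classic (exists S' lam', ext_irr_dom e S' lam' /\ #|S'| < #|S|)).
  by case=> S' [lam' [domS' ltS']]; apply: (IH S' lam') => //; lia.
move=> no_smaller; exists S, lam; split => // S' lam' domS'.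
by rewrite leqNgt; apply/negP => ltS'; apply: no_smaller; exists S', lam'.
Qed.

Lemma ext_irr_dom_of_injective (T : finType) (e : rel T) n (c : 'I_n.+1 -> T) :
  injective c -> (forall u, exists i : 'I_n.+1, at_dist e (c i) u i) ->
  exists S lam, ext_irr_dom e S lam.
Proof.
move=> c_inj cover.
pose lam v := if [pick i | c i == v] is Some i then val i else 0.
have lamK i : lam (c i) = i.
  by rewrite /lam; case: pickP => [j /eqP /c_inj -> // | /(_ i)]; rewrite eqxx.
exists (c @: setT), lam; split; [|split].
- by move=> _ _ /imsetP [i _ ->] /imsetP [j _ ->]; rewrite !lamK => /val_inj ->.
- by exists (c ord0); rewrite ?imset_f ?lamK.
- by move=> u; have [i cover_i] := cover u; exists (c i); rewrite ?imset_f ?lamK.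
Qed.

Section CycleDistance.
Variable n : nat.

(* For [x, y < n] and [j <= n], [y = x + j] or [x = y + j] modulo [n], stated without
   [modn] so that [lia] can reason about it. *)
Definition apart (x y j : nat) :=
  [|| y == x + j, y + n == x + j, x == y + j | x + n == y + j].

Lemma cycle_relE (a b : 'I_n) : cycle_rel a b = apart a b 1.
Proof.
have succ_mod (c d : 'I_n) : (c.+1 %% n == d) = (d == c + 1 :> nat) || (d + n == c + 1).
  have [cn|lt_cn] := eqVneq c.+1 n; first by rewrite cn modnn; case: d => d /= ?; lia.
  by rewrite modn_small; case: c d lt_cn => c /= ? [d /= ?]; lia.
by rewrite /cycle_rel !succ_mod /apart; case: a b => a /= ? [b /= ?]; lia.
Qed.

Lemma ball_apart k (x y : 'I_n) : k < n ->
  y \in ball (@cycle_rel n) k x -> exists2 j, j <= k & apart x y j.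
Proof.
elim: k y => [|k IH] y lt_kn /=.
  by rewrite in_set1 => /eqP ->; exists 0; rewrite /apart ?addn0 ?eqxx.
rewrite in_setU in_set => /orP [/IH [|j le_jk apart_j]|/existsP [z /andP [z_in]]].
- exact: ltnW.
- by exists j => //; apply: leqW.
- rewrite cycle_relE => apart_1; have [j le_jk apart_j] := IH z (ltnW lt_kn) z_in.
  move: apart_j apart_1; case: x y z {IH z_in} => [x ?] [y ?] [z ?] /=.
  rewrite /apart => apart_j apart_1.
  have [apart_S|] := boolP (apart x y j.+1); first by exists j.+1.
  have [apart_P|] := boolP (apart x y j.-1); first by exists j.-1 => //; lia.
  by rewrite /apart; lia.
Qed.

Lemma apart_ball j (x y : 'I_n) : j < n -> apart x y j -> y \in ball (@cycle_rel n) j x.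
Proof.
elim: j y => [|j IH] y lt_jn apart_j.
  by rewrite /= in_set1 -val_eqE; move: apart_j; rewrite /apart; case: x y => [x ?] [y ?] /=; lia.
rewrite /= in_setU in_set; apply/orP; right; apply/existsP.
have step v (lt_vn : v < n) : apart x v j -> apart v y 1 ->
    exists z, (z \in ball (@cycle_rel n) j x) && cycle_rel z y.
  by move=> ? ?; exists (Ordinal lt_vn); rewrite IH 1?ltnW ?cycle_relE.
have := ltn_ord x; have := ltn_ord y; rewrite /apart in apart_j step *.
case/or4P: apart_j => /eqP E lt_yn lt_xn.
- by apply: (step (x + j)); lia.
- by case: (ltnP (x + j) n) => L; [apply: (step (x + j)) | apply: (step (x + j - n))]; lia.
- by apply: (step y.+1); lia.
- by case: (ltnP y.+1 n) => L; [apply: (step y.+1) | apply: (step 0)]; lia.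
Qed.

Lemma at_dist_cycle (x y : 'I_n) l : l.*2 <= n ->
  (y == x + l %[mod n]) || (x == y + l %[mod n]) -> at_dist (@cycle_rel n) x y l.
Proof.
move=> le_2l_n cong_xy; have lt_ln : l < n by have := ltn_ord x; lia.
have mod_apart (a b : 'I_n) :
    (a == b + l %[mod n]) -> (a == b + l :> nat) || (a + n == b + l).
  rewrite (modn_small (ltn_ord a)); case: (ltnP (b + l) n) => L.
    by rewrite modn_small // => ->.
  by rewrite -(subnK L) modnDr modn_small => [/eqP|]; have := ltn_ord a; have := ltn_ord b; lia.
have apart_l : apart x y l.
  by rewrite /apart; case/orP: cong_xy => /mod_apart; lia.
rewrite /at_dist apart_ball //=.
case: l lt_ln le_2l_n apart_l {mod_apart cong_xy} => // l lt_ln le_2l_n apart_l.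
apply/negP => /ball_apart [|j le_jl]; first lia.
by move: apart_l; rewrite /apart; have := ltn_ord x; have := ltn_ord y; lia.
Qed.
End CycleDistance.

Section ChineseRemainder.
Variable p : nat.
Hypotheses (p_pr : prime p) (p_odd : odd p).
Local Notation F := 'F_p.
Local Open Scope ring_scope.

Lemma ltn_val_Fp (x : F) : (val x < p)%N.
Proof. by case: x => x /=; rewrite Fp_cast. Qed.

Lemma val_Fp_gt0 (x : F) : x != 0 -> (0 < val x)%N.
Proof.
by move=> x_neq0; rewrite lt0n; apply: contra x_neq0 => /eqP val0; apply/eqP/val_inj.
Qed.

Lemma eqr_nat_Fp a b : (a%:R == b%:R :> F) = (a == b %[mod p])%N.
Proof. by rewrite -val_eqE /= !val_Fp_nat. Qed.

Lemma eqn_mod_double a b :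
  (a == b %[mod 2 * p])%N = (odd a == odd b) && (a%:R == b%:R :> F).
Proof.
rewrite chinese_remainder ?coprime2n // !modn2 eqr_nat_Fp.
by case: (odd a); case: (odd b).
Qed.

Let crt_lt (e : bool) (g : F) : ((if odd (val g) == e then val g else val g + p) < 2 * p)%N.
Proof. by have := ltn_val_Fp g; case: ifP; lia. Qed.

(* The vertex of parity [e] and residue [g] modulo [p]. *)
Definition crt (e : bool) (g : F) : 'I_(2 * p) := Ordinal (crt_lt e g).

Lemma odd_crt e g : odd (crt e g) = e.
Proof.
by rewrite /=; case: ifP => [/eqP //|/negbT]; rewrite oddD p_odd addbT; case: e; case: odd.
Qed.

Lemma natr_crt e g : (crt e g)%:R = g :> F.
Proof.
by rewrite /=; case: ifP => _; rewrite ?natrD ?(pchar_Fp_0 p_pr) ?addr0; apply: natr_Zp.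
Qed.

Lemma crt_coordK (u : 'I_(2 * p)) : crt (odd u) u%:R = u.
Proof.
apply/val_inj/eqP; have : (crt (odd u) u%:R == u %[mod 2 * p])%N.
  by rewrite eqn_mod_double odd_crt natr_crt !eqxx.
by rewrite !modn_small.
Qed.

Lemma at_dist_crt e g e' g' l : (l <= p)%N -> e' = e (+) odd l ->
  g' = g + l%:R \/ g = g' + l%:R -> at_dist (@cycle_rel (2 * p)) (crt e g) (crt e' g') l.
Proof.
move=> le_lp -> shift; apply: at_dist_cycle; first lia.
rewrite !eqn_mod_double !oddD !natrD !odd_crt !natr_crt.
by case: shift => ->; rewrite -addbA addbb addbF !eqxx /= ?orbT.
Qed.
End ChineseRemainder.

Section Construction.
Variable p : nat.
Hypotheses (p_pr : prime p) (p_ge5 : (5 <= p)%N).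
Local Notation F := 'F_p.
Local Notation m := p./2.
Local Open Scope ring_scope.

Lemma p_odd : odd p.
Proof. by case: (even_prime p_pr) p_ge5 => // ->. Qed.

Lemma half_double_p : (m.*2 = p.-1)%N.
Proof. exact: odd_halfK p_odd. Qed.

Lemma half_p_gt0 : (0 < m)%N.
Proof. by have := half_double_p; lia. Qed.

Lemma oner_neqN1 : (1 : F) != -1.
Proof.
rewrite -subr_eq0 opprK -[1 + 1]/(2%:R : F) -[0 : F]/(0%:R) (eqr_nat_Fp p_pr).
by rewrite !modn_small //; lia.
Qed.

Lemma expr_half_Fp (x : F) : x != 0 -> x ^+ m = 1 \/ x ^+ m = -1.
Proof.
move=> x_neq0; have fermat : x ^+ p.-1 = 1.
  apply: (mulIf x_neq0); rewrite mul1r -exprSr prednK ?prime_gt0 //.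
  by have := expf_card x; rewrite card_Fp.
have : (x ^+ m) ^+ 2 == 1 by rewrite -exprM muln2 half_double_p fermat.
by rewrite sqrf_eq1 => /orP [] /eqP; [left | right].
Qed.

Lemma exists_nonresidue_neqN1 : exists2 w : F, w ^+ m = -1 & w != -1.
Proof.
case: (boolP [exists w : F, (w ^+ m == -1) && (w != -1)]).
  by case/existsP => w /andP [/eqP]; exists w.
rewrite negb_exists => /forallP no_w.
pose A := [set: F] :\ 0 :\ -1.
have card_A : (#|A| + 2 = p)%N.
  have := cardsD1 0 [set: F]; have := cardsD1 (-1) ([set: F] :\ 0).
  rewrite cardsT (card_Fp p_pr) !inE oppr_eq0 oner_eq0 /= -/A => E1 E2.
  by rewrite [in RHS]E2 E1 addnA addnC.
have : (size (enum A) <= m)%N.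
  apply: max_unity_roots; [by have := half_double_p; lia | | exact: enum_uniq].
  apply/allP => x; rewrite mem_enum !inE => /andP [x_neqN1 /andP [x_neq0 _]].
  rewrite unity_rootE; have := no_w x; rewrite x_neqN1 andbT.
  by case: (expr_half_Fp x_neq0) => ->; rewrite ?eqxx.
by rewrite -cardE; have := half_double_p; lia.
Qed.

Section Centres.
Variable w : F.
Hypotheses (w_nonres : w ^+ m = -1) (w_neqN1 : w != -1).

Lemma w_neq0 : w != 0.
Proof.
apply: contra_eqN w_nonres => /eqP ->.
by rewrite expr0n gtn_eqF ?half_p_gt0 // eq_sym oppr_eq0 oner_eq0.
Qed.

Lemma w_neq1 : w != 1.
Proof. by apply: contra_eqN w_nonres => /eqP ->; rewrite expr1n oner_neqN1. Qed.

Definition k : F := (w + 1) / (w - 1).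

Lemma subw1_neq0 : w - 1 != 0.
Proof. by rewrite subr_eq0 w_neq1. Qed.

Lemma k_neq0 : k != 0.
Proof. by rewrite mulf_neq0 ?invr_eq0 ?subw1_neq0 // addr_eq0. Qed.

Lemma subk1_neq0 : k - 1 != 0.
Proof.
have -> : k - 1 = (1 + 1) / (w - 1) by rewrite /k; field; rewrite subw1_neq0.
by rewrite mulf_neq0 ?invr_eq0 ?subw1_neq0 // addr_eq0 oner_neqN1.
Qed.

Lemma addk1 : k + 1 = w * (k - 1).
Proof. by rewrite /k; field; rewrite subw1_neq0. Qed.

(* The label [p] is treated as a non-residue and the label [0] as a residue. *)
Definition nonres (l : nat) : bool := (0 < l)%N && ((l%:R : F) ^+ m != 1).

Lemma nonres_p : nonres p.
Proof.
by rewrite /nonres prime_gt0 // (pchar_Fp_0 p_pr) expr0n gtn_eqF ?half_p_gt0 // eq_sym oner_eq0.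
Qed.

Lemma double_nonres_le l : ((nonres l).*2 <= l)%N.
Proof.
rewrite /nonres; case: l => [|[|l]] //=; last by case: (_ != 1).
by rewrite (_ : 1%:R = 1 :> F) // expr1n.
Qed.

Lemma sub_double_nonres_lt l : (l <= p)%N -> (l - (nonres l).*2 < p)%N.
Proof. by case: (eqVneq l p) => [->|]; [rewrite nonres_p /=|]; lia. Qed.

Definition centre (l : nat) : 'I_(2 * p) :=
  crt p_pr p_odd (odd l (+) nonres l) (k * (l - (nonres l).*2)%:R).

Lemma centre_inj l1 l2 :
  (l1 <= p)%N -> (l2 <= p)%N -> centre l1 = centre l2 -> l1 = l2.
Proof.
move=> le1 le2 eq_c.
have := congr1 (fun v : 'I_(2 * p) => odd v) eq_c; rewrite !(odd_crt p_pr p_odd).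
have := congr1 (fun v : 'I_(2 * p) => v%:R : F) eq_c.
rewrite !(natr_crt p_pr p_odd) => /(mulfI k_neq0) /eqP.
rewrite (eqr_nat_Fp p_pr) !modn_small ?sub_double_nonres_lt // => /eqP eq_sub.
have odd_sub l : odd (l - (nonres l).*2) = odd l.
  by rewrite oddB ?double_nonres_le // odd_double addbF.
rewrite -(odd_sub l1) -(odd_sub l2) eq_sub => /addbI eq_nonres.
by have := double_nonres_le l1; have := double_nonres_le l2; move: eq_sub; rewrite eq_nonres; lia.
Qed.

Lemma at_dist_centre l (u : 'I_(2 * p)) : (l <= p)%N -> odd u = nonres l ->
  let y := u%:R + k * (nonres l).*2%:R in y = (k + 1) * l%:R \/ y = (k - 1) * l%:R ->
  at_dist (@cycle_rel (2 * p)) (centre l) u l.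
Proof.
move=> le_lp odd_u y eq_y; rewrite {}/y in eq_y; rewrite -(crt_coordK p_pr p_odd u) /centre.
apply: (at_dist_crt p_pr p_odd) => //; first by rewrite odd_u addbAC addbb.
rewrite natrB ?double_nonres_le //.
by case: eq_y => /(canRL (addrK _)) ->; [left | right]; ring.
Qed.

Lemma exists_label (y : F) (b : bool) : y != 0 ->
  exists l, [/\ (0 < l < p)%N, nonres l = b & y = (k + 1) * l%:R \/ y = (k - 1) * l%:R].
Proof.
move=> y_neq0; pose x := y / (k - 1).
have x_neq0 : x != 0 by rewrite mulf_neq0 ?invr_eq0 ?subk1_neq0.
have label z : z != 0 -> (z ^+ m != 1) = b -> y = (k + 1) * z \/ y = (k - 1) * z ->
    exists l, [/\ (0 < l < p)%N, nonres l = b & y = (k + 1) * l%:R \/ y = (k - 1) * l%:R].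
  move=> z_neq0 z_b eq_y; have z_gt0 := val_Fp_gt0 z_neq0.
  by exists (val z); rewrite z_gt0 ltn_val_Fp // /nonres natr_Zp z_gt0 z_b.
have [x_b | /negPf x_nb] := eqVneq (x ^+ m != 1) b.
  by apply: (label x) => //; right; rewrite /x mulrC divfK ?subk1_neq0.
apply: (label (x / w)) => {label}; first by rewrite mulf_neq0 ?invr_eq0 ?w_neq0.
  have n1 := negbTE oner_neqN1; rewrite eq_sym in n1.
  rewrite expr_div_n w_nonres invrN1 mulrN1; move: x_nb.
  by case: (expr_half_Fp x_neq0) => ->; rewrite ?opprK ?n1 ?eqxx; case: b.
by left; rewrite addk1 /x; field; rewrite w_neq0 subk1_neq0.
Qed.

Lemma centre_cover (u : 'I_(2 * p)) :
  exists2 l, (l <= p)%N & at_dist (@cycle_rel (2 * p)) (centre l) u l.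
Proof.
have [y0 | y_neq0] := eqVneq (u%:R + k * (odd u).*2%:R) 0.
  pose l := if odd u then p else 0%N.
  have nonres_l : nonres l = odd u by rewrite /l; case: odd; rewrite ?nonres_p.
  have natr_l : l%:R = 0 :> F by rewrite /l; case: odd; rewrite ?(pchar_Fp_0 p_pr).
  exists l; first by rewrite /l; case: odd.
  apply: at_dist_centre; rewrite ?nonres_l //; first by rewrite /l; case: odd.
  by left; rewrite y0 natr_l mulr0.
have [l [/andP [l_gt0 lt_lp] nonres_l eq_y]] := exists_label (odd u) y_neq0.
by exists l; [apply: ltnW | apply: at_dist_centre; rewrite ?nonres_l //; apply: ltnW].
Qed.

Lemma ext_irr_dom_centres : exists S lam, ext_irr_dom (@cycle_rel (2 * p)) S lam.
Proof.
apply: (@ext_irr_dom_of_injective _ _ p (fun i => centre i)).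
  by move=> i j /(centre_inj (ltn_ord i) (ltn_ord j)) /val_inj.
move=> u; have [l le_lp dist_l] := centre_cover u.
by exists (Ordinal (le_lp : (l < p.+1)%N)).
Qed.
End Centres.

Lemma exists_ext_irr_dom_cycle_2p : exists S lam, ext_irr_dom (@cycle_rel (2 * p)) S lam.
Proof.
have [w w_nonres w_neqN1] := exists_nonresidue_neqN1.
exact: ext_irr_dom_centres w_nonres w_neqN1.
Qed.
End Construction.

Theorem corollary4p9 (p : nat) (hp : prime p) (h7 : 7 <= p) :
  exists (S : {set 'I_(2 * p)}) (lam : 'I_(2 * p) -> nat),
    optimal_ext_irr_dom (@cycle_rel (2 * p)) S lam.
Proof.
apply/optimal_ext_irr_dom_exists/(exists_ext_irr_dom_cycle_2p hp).
exact: leq_trans h7.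
Qed.
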